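(* Let $-\infty<a<b<\infty$ and let $H\in\mathbb H_{a,b}$ be in the limit circle case. Let $c>0$ and let $\kappa_H$ be the function produced by the algorithm with constant $c$. Let $r>0$ and let $a=s_0<s_1<\dots<s_{k-1}<s_k=b$. - (i) If $\det\Omega(s_{l-1},s_l)\le c/r^2$ for all $l\in\{1,\dots,k\}$, then $\kappa_H(r)\le k$. - (ii) If $\det\Omega(s_{l-1},s_l)\ge c/r^2$ for all $l\in\{1,\dots,k-1\}$, then $\kappa_H(r)\ge k$. - (iii) The function $\kappa_H$ is non-decreasing on $(0,\infty)$. - (iv) $\kappa_H(nr)\le n\,\kappa_H(r)$ for every positive integer $n$ and every $r>0$.
   Context: Hamiltonians: $\mathbb H_{a,b}$ consists of measurable $H:(a,b)\to\mathbb R^{2\times2}$, locally integrable on $[a,c)$ for all $c<b$, with $H(t)\ge0$ a.e. and $\{H=0\}$ null. The limit circle case means $\int_a^b\operatorname{tr}H<\infty$. Put $\Omega(s,t)=\int_s^tH(u)\,du$. Algorithm for $\kappa_H$ (constant $c$): for $r>0$ set $\sigma_0=a$. Recursively: - if $\det\Omega(\sigma_{j-1},b)>c/r^2$, let $\sigma_j\in(\sigma_{j-1},b)$ be the unique point with $\det\Omega(\sigma_{j-1},\sigma_j)=c/r^2$; - otherwise set $\sigma_j=b$, $\kappa_H(r)=j$, and stop. This terminates after finitely many steps. *)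

From HB Require Import structures.
From mathcomp Require Import all_boot all_order all_algebra.
From mathcomp Require Import all_classical all_reals all_analysis.
Set Implicit Arguments. Unset Strict Implicit. Unset Printing Implicit Defensive.
Import Order.TTheory GRing.Theory Num.Theory.
Local Open Scope classical_set_scope.
Local Open Scope ring_scope.

Section Hamiltonians.
Variable R : realType.
Local Notation mu := (@lebesgue_measure R).

Definition psd2 (M : 'M[R]_2) : Prop :=
  M^T = M /\ forall v : 'cV[R]_2, 0 <= (v^T *m M *m v) 0 0.

(* H in H_{a,b}: measurable, locally integrable on [a,c) for c<b,
   H >= 0 a.e. on (a,b), and {t in (a,b) | H t = 0} is a null set.
   Values of H outside (a,b) are irrelevant. *)
Definition is_Hamiltonian (a b : R) (H : R -> 'M[R]_2) : Prop :=
  [/\ (forall i j, measurable_fun `]a, b[ (fun t => H t i j)),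
      (forall cc, a < cc < b -> forall i j,
          mu.-integrable `]a, cc[ (fun t => (H t i j)%:E)),
      {ae mu, forall t, t \in `]a, b[ -> psd2 (H t)} &
      mu.-negligible ([set t | (t \in `]a, b[) /\ H t = 0]) ].

Definition limit_circle (a b : R) (H : R -> 'M[R]_2) : Prop :=
  (\int[mu]_(t in `]a, b[) (\tr (H t))%:E < +oo)%E.

Definition Omega (H : R -> 'M[R]_2) (s t : R) : 'M[R]_2 :=
  \matrix_(i, j) Rintegral mu `]s, t[ (fun u => H u i j).

(* kappa_spec a b H c r n : the algorithm with constant c, run at r,
   stops with kappa_H(r) = n; sigma is the sequence sigma_0, ..., sigma_n. *)
Definition kappa_spec (a b : R) (H : R -> 'M[R]_2) (c r : R) (n : nat) : Prop :=
  exists sigma : nat -> R,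
    [/\ sigma 0%N = a,
        (forall j, (0 < j < n)%N ->
           [/\ \det (Omega H (sigma j.-1) b) > c / r ^+ 2,
               sigma j.-1 < sigma j < b &
               \det (Omega H (sigma j.-1) (sigma j)) = c / r ^+ 2]),
        (0 < n)%N,
        \det (Omega H (sigma n.-1) b) <= c / r ^+ 2 &
        sigma n = b].

Lemma kappa_spec_exists_bool (a b : R) (H : R -> 'M[R]_2) (c r : R) :
  (exists n, kappa_spec a b H c r n) ->
  exists n, `[< kappa_spec a b H c r n >].
Proof. by move=> [n hn]; exists n; apply/asboolP. Qed.

(* kappa_H(r): the number of steps after which the algorithm stops
   (the algorithm is deterministic, so this n is unique; we take the
   least such n; default 0 is never used since the algorithm terminates). *)
Definition kappa (a b : R) (H : R -> 'M[R]_2) (c r : R) : nat :=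
  match pselect (exists n, kappa_spec a b H c r n) with
  | left h => ex_minn (kappa_spec_exists_bool h)
  | right _ => 0%N
  end.

End Hamiltonians.

(* The proof only uses the following properties of [w s t := Omega H s t] on
   [a <= s <= t <= b]: it is additive, positive semidefinite, continuous in [t], and has
   positive trace when [s < t], because [H] vanishes only on a null set. For 2x2 positive
   semidefinite matrices [det (A + B) = det A + det B + m(A, B)], where the mixed term
   satisfies [m(A, B) >= 2 sqrt (det A * det B)], so [sqrt (det w)] is superadditive
   (Minkowski), and [m(A, B) > 0] once [det A > 0] and [tr B > 0], so [t |-> det (w s t)] is
   strictly increasing where it is positive. Hence, by induction, the points of the greedy
   run stay ahead of those of any partition whose pieces have determinant at most c/r^2,
   which gives (i) and then (iii), and behind those of any sequence whose pieces have
   determinant at least c/r^2, which gives (ii). For (iv), Minkowski shows that n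
   consecutive pieces of the run for [n r] have determinant at least
   [n^2 * c/(n r)^2 = c/r^2], so every n-th point of that run lies beyond the corresponding
   point of the run for [r]. To handle the integrals, [H] is replaced by a Hamiltonian that
   is positive semidefinite everywhere, integrable on the whole line and has the same
   [Omega] on [[a, b]]. *)

From HB Require Import structures.
From mathcomp Require Import all_boot all_order all_algebra.
From mathcomp Require Import all_classical all_reals all_analysis.
From mathcomp Require Import measurable_realfun lra ring.
Import Order.TTheory GRing.Theory Num.Theory.
Import numFieldNormedType.Exports.
Local Open Scope classical_set_scope.
Local Open Scope ring_scope.
Set Implicit Arguments. Unset Strict Implicit.

Section PsdMx2.
Variable R : realFieldType.
Implicit Types (A B M : 'M[R]_2) (u v x y : R).

Definition psdmx2 M :=
  [/\ M 0 1 = M 1 0, 0 <= M 0 0, 0 <= M 1 1 & M 0 1 ^+ 2 <= M 0 0 * M 1 1].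

Definition qform2 M x y := x ^+ 2 * M 0 0 + 2 * x * y * M 0 1 + y ^+ 2 * M 1 1.

Definition mixed_det A B :=
  A 0 0 * B 1 1 + A 1 1 * B 0 0 - A 0 1 * B 1 0 - A 1 0 * B 0 1.

Lemma det_mx2 M : \det M = M 0 0 * M 1 1 - M 0 1 * M 1 0.
Proof.
rewrite (expand_det_row _ 0) !big_ord_recl big_ord0 addr0 /cofactor !det_mx11 !mxE /=.
rewrite expr0 expr1 !mul1r mulN1r mulrN.
by congr (M _ _ * M _ _ - M _ _ * M _ _); apply/val_inj.
Qed.

Lemma mxtrace_mx2 M : \tr M = M 0 0 + M 1 1.
Proof.
rewrite /mxtrace !big_ord_recl big_ord0 addr0 /=.
by congr (M _ _ + M _ _); apply/val_inj.
Qed.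

Lemma det_addmx2 A B : \det (A + B) = \det A + \det B + mixed_det A B.
Proof. by rewrite !det_mx2 !mxE /mixed_det; ring. Qed.

Lemma AGM2_le x y u : 0 <= x -> 0 <= y -> u ^+ 2 <= x * y -> 2 * u <= x + y.
Proof. move=> x0 y0 h; have := sqr_ge0 (x - y); nra. Qed.

Lemma psdmx2_qformP M :
  M 0 1 = M 1 0 -> psdmx2 M <-> forall x y, 0 <= qform2 M x y.
Proof.
rewrite /qform2 => sym; split=> [[_ p0 q0 rpq] x y | h].
  have xp := mulr_ge0 (sqr_ge0 x) p0; have yq := mulr_ge0 (sqr_ge0 y) q0.
  have := AGM2_le xp yq (u := - (x * y * M 0 1)).
  have := sqr_ge0 (x * y); nra.
have p0 := h 1 0; have q0 := h 0 1.
rewrite expr1n expr0n /= !mulr0 !mul0r ?addr0 ?add0r !mul1r in p0 q0.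
split=> //.
have [p00|pn0] := eqVneq (M 0 0) 0.
  have := h (- (M 1 1 + 1) / 2) (M 0 1); rewrite p00; nra.
have := h (M 0 1) (- M 0 0); nra.
Qed.

Lemma qform2_mulmx M x y : M 0 1 = M 1 0 ->
  let v := \col_(i < 2) (if i == 0 then x else y) in (v^T *m M *m v) 0 0 = qform2 M x y.
Proof.
move=> sym /=; rewrite !mxE !big_ord_recl !big_ord0 !mxE /= !big_ord_recl !big_ord0 !mxE /=.
have -> : lift ord0 (ord0 : 'I_1) = 1 :> 'I_2 by apply/val_inj.
by rewrite /qform2 -sym; ring.
Qed.

Lemma psdmx2_det_ge0 M : psdmx2 M -> 0 <= \det M.
Proof. by move=> [sym _ _ rpq]; rewrite det_mx2 -sym; lra. Qed.

Lemma psdmx2_tr_ge0 M : psdmx2 M -> 0 <= \tr M.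
Proof. by move=> [_ p0 q0 _]; rewrite mxtrace_mx2 addr_ge0. Qed.

(* AM-GM on [A00 * B11 + A11 * B00], then Cauchy-Schwarz for [(|A01|, u)] and [(|B01|, v)]. *)
Lemma mixed_det_ge A B u v : psdmx2 A -> psdmx2 B -> 0 <= u -> 0 <= v ->
  u ^+ 2 <= \det A -> v ^+ 2 <= \det B -> 2 * (u * v) <= mixed_det A B.
Proof.
move=> [symA pA qA rA] [symB xB yB zB] u0 v0.
rewrite !det_mx2 /mixed_det -symA -symB => hu hv.
set rho := `|A 0 1|; set zeta := `|B 0 1|.
have rho2 : rho ^+ 2 = A 0 1 ^+ 2 by rewrite real_normK ?num_real.
have zeta2 : zeta ^+ 2 = B 0 1 ^+ 2 by rewrite real_normK ?num_real.
have rz : A 0 1 * B 0 1 <= rho * zeta by rewrite -normrM real_ler_norm ?num_real.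
have CS : (rho * zeta + u * v) ^+ 2 <= (rho ^+ 2 + u ^+ 2) * (zeta ^+ 2 + v ^+ 2).
  by have := sqr_ge0 (rho * v - u * zeta); nra.
have prod : (rho ^+ 2 + u ^+ 2) * (zeta ^+ 2 + v ^+ 2) <= A 0 0 * B 1 1 * (A 1 1 * B 0 0).
  have -> : A 0 0 * B 1 1 * (A 1 1 * B 0 0) = (A 0 0 * A 1 1) * (B 0 0 * B 1 1) by ring.
  by apply: ler_pM; rewrite ?addr_ge0 ?sqr_ge0 //; lra.
have := AGM2_le (mulr_ge0 pA yB) (mulr_ge0 qA xB) (le_trans CS prod).
lra.
Qed.

(* [A00 * mixed_det A B = qform2 B (- A01) A00 + B00 * det A], and symmetrically for [A11]. *)
Lemma mixed_det_tr A B : psdmx2 A -> psdmx2 B ->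
  \tr B * \det A <= \tr A * mixed_det A B.
Proof.
move=> hA hB; have [symA _ _ _] := hA; have [symB _ _ _] := hB.
have qB := (psdmx2_qformP symB).1 hB.
have := qB (- A 0 1) (A 0 0); have := qB (A 1 1) (- A 0 1).
rewrite !mxtrace_mx2 det_mx2 /mixed_det /qform2 -symA -symB.
nra.
Qed.

Lemma det_superadd A B : psdmx2 A -> psdmx2 B -> \det A + \det B <= \det (A + B).
Proof.
move=> hA hB; rewrite det_addmx2.
have := mixed_det_ge hA hB (lexx 0) (lexx 0).
by rewrite expr0n /= !psdmx2_det_ge0 // mulr0 => /(_ isT isT); lra.
Qed.

Lemma det_minkowski A B u v : psdmx2 A -> psdmx2 B -> 0 <= u -> 0 <= v ->
  u ^+ 2 <= \det A -> v ^+ 2 <= \det B -> (u + v) ^+ 2 <= \det (A + B).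
Proof.
move=> hA hB u0 v0 hu hv; rewrite det_addmx2.
have := mixed_det_ge hA hB u0 v0 hu hv; nra.
Qed.

Lemma det_lt_addr A B : psdmx2 A -> psdmx2 B -> 0 < \det A -> 0 < \tr B ->
  \det A < \det (A + B).
Proof.
move=> hA hB dA tB; rewrite det_addmx2.
have := mixed_det_tr hA hB; have := psdmx2_tr_ge0 hA; have := psdmx2_det_ge0 hB.
nra.
Qed.

Lemma ord2P (i : 'I_2) : i = 0 \/ i = 1.
Proof. by case: i => [[|[|//]]] ?; [left|right]; apply/val_inj. Qed.

Lemma psdmx2_tr_eq0 M : psdmx2 M -> \tr M = 0 -> M = 0.
Proof.
move=> [sym p0 q0 rpq]; rewrite mxtrace_mx2 => tr0.
have e0 : M 0 0 = 0 by lra.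
have e1 : M 1 1 = 0 by lra.
have e2 : M 0 1 = 0.
  by apply/eqP; rewrite -sqrf_eq0 eq_le sqr_ge0 andbT -(mul0r (M 1 1)) -e0.
apply/matrixP => i j; rewrite mxE.
by case: (ord2P i) => ->; case: (ord2P j) => ->; rewrite ?e0 ?e1 -?sym ?e2.
Qed.

Lemma psdmx2_entry_le_tr M i j : psdmx2 M -> `|M i j| <= \tr M.
Proof.
move=> [sym p0 q0 rpq]; rewrite mxtrace_mx2.
have off : `|M 0 1| <= M 0 0 + M 1 1.
  have := AGM2_le p0 q0 (u := `|M 0 1|); rewrite real_normK ?num_real // => /(_ rpq).
  by have := normr_ge0 (M 0 1); lra.
by case: (ord2P i) => ->; case: (ord2P j) => ->; rewrite -?sym // ger0_norm //; lra.
Qed.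
End PsdMx2.

Lemma le_chain d (T : porderType d) (y : nat -> T) i j :
  (forall k, (i <= k < j)%N -> (y k <= y k.+1)%O) -> (i <= j)%N -> (y i <= y j)%O.
Proof.
elim: j => [|j IH] hy; first by rewrite leqn0 => /eqP ->.
rewrite leq_eqVlt => /orP[/eqP -> //|ij].
have hy' k : (i <= k < j)%N -> (y k <= y k.+1)%O.
  by move=> /andP[ik kj]; apply: hy; rewrite ik ltnW.
by apply: le_trans (IH hy' ij) (hy j _); rewrite -ltnS ij ltnSn.
Qed.

Section IntervalFunction.
Variable R : realType.
Variables (a b : R) (w : R -> R -> 'M[R]_2).
Hypothesis ab : a < b.
Hypothesis w_psd : forall s t, a <= s -> s <= t -> t <= b -> psdmx2 (w s t).
Hypothesis w_add : forall s u t, a <= s -> s <= u -> u <= t -> t <= b ->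
  w s t = w s u + w u t.
Hypothesis w_tr_gt0 : forall s t, a <= s -> s < t -> t <= b -> 0 < \tr (w s t).
Hypothesis det_w_cont : forall s, a <= s -> s < b ->
  {within `[s, b], continuous (fun t => \det (w s t))}.

Lemma det_w_id s : a <= s -> s <= b -> \det (w s s) = 0.
Proof.
move=> sa sb; suff -> : w s s = 0 by rewrite det0.
by apply: (@addrI _ (w s s)); rewrite addr0 -w_add.
Qed.

Lemma det_w_ge0 s t : a <= s -> s <= t -> t <= b -> 0 <= \det (w s t).
Proof. by move=> sa st tb; apply/psdmx2_det_ge0/w_psd. Qed.

Lemma det_w_superadd s u t : a <= s -> s <= u -> u <= t -> t <= b ->
  \det (w s u) + \det (w u t) <= \det (w s t).
Proof.
move=> sa su ut tb; rewrite (w_add sa su ut tb).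
by apply: det_superadd; apply: w_psd => //; [apply: le_trans tb | apply: le_trans su].
Qed.

Lemma det_w_le s s' t' t : a <= s -> s <= s' -> s' <= t' -> t' <= t -> t <= b ->
  \det (w s' t') <= \det (w s t).
Proof.
move=> sa ss' s't' t't tb.
have := det_w_superadd sa ss' (le_trans s't' t't) tb.
have := det_w_superadd (le_trans sa ss') s't' t't tb.
have := det_w_ge0 sa ss' (le_trans s't' (le_trans t't tb)).
have := det_w_ge0 (le_trans (le_trans sa ss') s't') t't tb.
lra.
Qed.

(* The only use of [w_tr_gt0]; for [w = Omega H] it comes from [H] vanishing only on a
   null set. *)
Lemma det_w_lt s t t' u : a <= s -> s <= t -> t <= t' -> t' < u -> u <= b ->
  0 < \det (w t t') -> \det (w t t') < \det (w s u).
Proof.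
move=> sa st tt' t'u ub d0.
have ta := le_trans sa st; have t'a := le_trans ta tt'.
apply: lt_le_trans (det_w_le sa st (le_trans tt' (ltW t'u)) (lexx u) ub).
rewrite (w_add ta tt' (ltW t'u) ub); apply: det_lt_addr => //.
- by apply: w_psd => //; apply: le_trans (ltW t'u) ub.
- by apply: w_psd => //; apply: ltW.
- exact: w_tr_gt0.
Qed.

Lemma det_w_minkowski s u t x y : a <= s -> s <= u -> u <= t -> t <= b ->
  0 <= x -> 0 <= y -> x ^+ 2 <= \det (w s u) -> y ^+ 2 <= \det (w u t) ->
  (x + y) ^+ 2 <= \det (w s t).
Proof.
move=> sa su ut tb; rewrite (w_add sa su ut tb).
by apply: det_minkowski; apply: w_psd => //; [apply: le_trans tb | apply: le_trans su].
Qed.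

Lemma det_w_chain (y : nat -> R) x i p : 0 <= x -> a <= y i -> y (i + p)%N <= b ->
  (forall j, (i <= j < i + p)%N -> y j <= y j.+1 /\ x ^+ 2 <= \det (w (y j) (y j.+1))) ->
  (p%:R * x) ^+ 2 <= \det (w (y i) (y (i + p)%N)).
Proof.
move=> x0 ya; elim: p => [|p IH] yb hy.
  by rewrite addn0 mul0r expr0n /= det_w_id // -(addn0 i).
have [yp yp1] : y (i + p)%N <= y (i + p).+1 /\
    x ^+ 2 <= \det (w (y (i + p)%N) (y (i + p).+1)).
  by apply: hy; rewrite leq_addr addnS ltnSn.
rewrite addnS in yb *; rewrite -natr1 mulrDl mul1r.
have hy' j : (i <= j < i + p)%N -> y j <= y j.+1 /\ x ^+ 2 <= \det (w (y j) (y j.+1)).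
  by move=> /andP[ij jp]; apply: hy; rewrite ij addnS ltnS ltnW.
apply: (det_w_minkowski (u := y (i + p)%N)) => //; last exact: IH (le_trans yp yb) hy'.
- by apply: le_chain (leq_addr p i) => k /hy'[].
- by rewrite mulr_ge0 ?ler0n.
Qed.

(* [kappa_spec a b H c r n] unfolds to
   [exists sigma, greedy_run a b (Omega H) (c / r ^+ 2) n sigma]. *)
Definition greedy_run (th : R) (n : nat) (sigma : nat -> R) :=
  [/\ sigma 0%N = a,
      (forall j, (0 < j < n)%N ->
         [/\ \det (w (sigma j.-1) b) > th,
             sigma j.-1 < sigma j < b &
             \det (w (sigma j.-1) (sigma j)) = th]),
      (0 < n)%N,
      \det (w (sigma n.-1) b) <= th &
      sigma n = b].

Section GreedyRun.
Variables (th : R) (n : nat) (sigma : nat -> R).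
Hypothesis run : greedy_run th n sigma.

Lemma greedy_run_bounds j : (j < n)%N -> a <= sigma j < b.
Proof.
have [s0 sj _ _ _] := run.
elim: j => [|j IH] jn; first by rewrite s0 lexx ab.
have [_ /andP[lt ->] _] := sj j.+1 jn.
by case/andP: (IH (ltnW jn)) => sa _; rewrite (le_trans sa (ltW lt)).
Qed.

Lemma greedy_run_le_b j : (j <= n)%N -> sigma j <= b.
Proof.
rewrite leq_eqVlt => /orP[/eqP -> | jn]; first by have [_ _ _ _ ->] := run.
by case/andP: (greedy_run_bounds jn) => _ /ltW.
Qed.

Lemma greedy_run_step j : (j < n)%N ->
  sigma j < sigma j.+1 /\ \det (w (sigma j) (sigma j.+1)) <= th.
Proof.
move=> jn; have [_ sj _ sn1 sn] := run.
have [j1n | nj1] := ltnP j.+1 n; first by have [_ /andP[-> _] ->] := sj j.+1 j1n.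
have e : j.+1 = n by apply/eqP; rewrite eqn_leq jn nj1.
rewrite e sn {2}(_ : j = n.-1) ?sn1 -?e //.
by case/andP: (greedy_run_bounds jn).
Qed.

Lemma greedy_run_piece j : (j.+1 < n)%N -> \det (w (sigma j) (sigma j.+1)) = th.
Proof. by move=> jn; have [_ sj _ _ _] := run; have [] := sj j.+1 jn. Qed.

Hypothesis th_gt0 : 0 < th.

Lemma greedy_run_le_large_pieces (y : nat -> R) L : y 0%N = a ->
    (forall l, (l < L)%N -> y l <= y l.+1 /\ th <= \det (w (y l) (y l.+1))) ->
  forall l, (l <= L)%N -> (l <= n)%N -> sigma l <= y l.
Proof.
move=> y0 hy; elim=> [|l IH] lL ln; first by have [-> _ _ _ _] := run; rewrite y0.
have sy := IH (ltnW lL) (ltnW ln).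
have [yl dy] := hy l lL.
rewrite leNgt; apply/negP => ys.
have /andP[sa _] := greedy_run_bounds ln.
have [_ dle] := greedy_run_step ln.
have := det_w_lt sa sy yl ys (greedy_run_le_b ln) (lt_le_trans th_gt0 dy).
lra.
Qed.

Lemma greedy_run_min_pieces (x : nat -> R) K : x 0%N = a -> x K = b ->
  (forall j, (j < K)%N -> x j <= x j.+1 /\ \det (w (x j) (x j.+1)) <= th) ->
  (n <= K)%N.
Proof.
move=> x0 xK hx.
have xmono i j : (i <= j <= K)%N -> x i <= x j.
  move=> /andP[ij jK]; apply: le_chain ij => k /andP[_ kj].
  by have [] := hx k (leq_trans kj jK).
have below j : (j < n)%N -> (j <= K)%N -> x j <= sigma j.
  elim: j => [|j IH] jn jK; first by have [-> _ _ _ _] := run; rewrite x0.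
  have xs := IH (ltnW jn) (ltnW jK).
  rewrite leNgt; apply/negP => sx.
  have [_ dx] := hx j jK.
  have [sj _] := greedy_run_step (ltnW jn).
  have xa : a <= x j by rewrite -x0 xmono // (ltnW jK).
  have xb : x j.+1 <= b by rewrite -xK xmono // jK leqnn.
  have := det_w_lt xa xs (ltW sj) sx xb; rewrite greedy_run_piece // => /(_ th_gt0).
  lra.
rewrite leqNgt; apply/negP => Kn.
have := below K Kn (leqnn K); rewrite xK => bs.
by case/andP: (greedy_run_bounds Kn) => _; rewrite ltNge bs.
Qed.

End GreedyRun.

Lemma greedy_run_max_pieces th n sigma (s : nat -> R) k :
  0 < th -> greedy_run th n sigma -> s 0%N = a -> s k = b ->
  (forall j, (j < k)%N -> s j < s j.+1) ->
  (forall j, (j.+1 < k)%N -> th <= \det (w (s j) (s j.+1))) -> (k <= n)%N.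
Proof.
move=> th0 run s0 sk sinc sdet; rewrite leqNgt; apply/negP => nk.
have k0 : (0 < k)%N by apply: leq_ltn_trans nk.
have nk' : (n <= k.-1)%N by rewrite -ltnS prednK.
have pieces j : (j < k.-1)%N -> s j <= s j.+1 /\ th <= \det (w (s j) (s j.+1)).
  by rewrite ltn_predRL => jk; rewrite ltW ?sinc ?sdet // ltnW.
have bs : b <= s n.
  have [_ _ _ _ <-] := run.
  exact: (greedy_run_le_large_pieces run th0 s0 pieces nk' (leqnn n)).
have sn : s n <= s k.-1.
  by apply: le_chain nk' => j /andP[_ jk]; apply/ltW/sinc/(ltn_trans jk); rewrite prednK.
have := sinc k.-1; rewrite prednK // sk => /(_ (leqnn k)).
by rewrite ltNge (le_trans bs sn).
Qed.

Lemma greedy_run_anti th1 th2 n1 n2 sigma1 sigma2 : 0 < th2 -> th2 <= th1 ->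
  greedy_run th1 n1 sigma1 -> greedy_run th2 n2 sigma2 -> (n1 <= n2)%N.
Proof.
move=> th20 th21 run1 run2; have [s0 _ _ _ sn] := run2.
apply: (greedy_run_min_pieces run1 (lt_le_trans th20 th21) s0 sn) => j jn.
by have [lt le] := greedy_run_step run2 jn; rewrite ltW ?(le_trans le th21).
Qed.

Lemma greedy_run_scale th m n N sigma tau : 0 < th -> (0 < m)%N ->
  greedy_run (m%:R ^+ 2 * th) n sigma -> greedy_run th N tau -> (N <= m * n)%N.
Proof.
move=> th0 m0 run run'; rewrite leqNgt; apply/negP => mnN.
have x0 := sqrtr_ge0 th.
have xx : Num.sqrt th ^+ 2 = th by rewrite sqr_sqrtr // ltW.
have big l : (l < n)%N -> tau (m * l)%N <= tau (m * l.+1)%N /\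
    m%:R ^+ 2 * th <= \det (w (tau (m * l)%N) (tau (m * l.+1)%N)).
  move=> ln; have mlN : (m * l.+1 < N)%N.
    by apply: leq_ltn_trans mnN; rewrite leq_mul2l ln orbT.
  rewrite mulnS addnC in mlN *.
  have pieces j : (m * l <= j < m * l + m)%N ->
      tau j <= tau j.+1 /\ Num.sqrt th ^+ 2 <= \det (w (tau j) (tau j.+1)).
    move=> /andP[_ jm]; have jN : (j.+1 < N)%N by apply: leq_ltn_trans mlN.
    have [lt _] := greedy_run_step run' (ltnW jN).
    by rewrite xx (greedy_run_piece run') // ltW.
  have /andP[ta _] := greedy_run_bounds run' (leq_ltn_trans (leq_addr m _) mlN).
  have tb := greedy_run_le_b run' (ltnW mlN).
  split; first by apply: le_chain (leq_addr _ _) => j /pieces[].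
  by have := det_w_chain x0 ta tb pieces; rewrite exprMn xx.
have t0 : tau (m * 0)%N = a by rewrite muln0; have [] := run'.
have th0' : 0 < m%:R ^+ 2 * th by rewrite mulr_gt0 // exprn_gt0 // ltr0n.
have := greedy_run_le_large_pieces run th0' t0 big (leqnn n) (leqnn n).
have [_ _ _ _ ->] := run => bt.
by have /andP[_] := greedy_run_bounds run' mnN; rewrite ltNge bt.
Qed.

(* The default [b] is also the algorithm's last point once [\det (w s b) <= th], see
   [greedy_next_stop]. *)
Definition greedy_next (th s : R) : R :=
  xget b [set t | s < t < b /\ \det (w s t) = th].

Lemma greedy_next_lt th s : 0 < th -> a <= s -> s < b -> th < \det (w s b) ->
  s < greedy_next th s < b /\ \det (w s (greedy_next th s)) = th.
Proof.
move=> th0 sa sb thd.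
apply: (@xgetPex _ b [set t | s < t < b /\ \det (w s t) = th]).
have [t ht dt] : exists2 t, t \in `[s, b] & \det (w s t) = th.
  apply: IVT; [exact: ltW | exact: det_w_cont | ].
  by rewrite det_w_id ?ge_min ?le_max ?(ltW th0) ?(ltW thd) ?orbT // ltW.
move: ht; rewrite in_itv /= => /andP[st tb].
exists t; split => //; apply/andP; split.
  rewrite lt_neqAle st andbT; apply/eqP => est.
  by move: dt; rewrite -est det_w_id ?(ltW sb) // => th00; move: th0; rewrite -th00 ltxx.
by rewrite lt_neqAle tb andbT; apply/eqP => etb; move: thd; rewrite -etb dt ltxx.
Qed.

Lemma greedy_next_stop th s : 0 < th -> a <= s -> \det (w s b) <= th ->
  greedy_next th s = b.
Proof.
move=> th0 sa dth; apply: xgetPN => t [/andP[st tb] dt].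
by have := det_w_lt sa (lexx s) (ltW st) tb (lexx b); rewrite dt => /(_ th0); lra.
Qed.

Definition greedy_seq th j := iter j (greedy_next th) a.

Lemma greedy_seq_inv th j : 0 < th ->
    (forall i, (i < j)%N -> th < \det (w (greedy_seq th i) b)) ->
  [/\ a <= greedy_seq th j, greedy_seq th j < b &
      j%:R * th <= \det (w a (greedy_seq th j))].
Proof.
move=> th0; elim: j => [|j IH] hj; first by rewrite /= lexx ab mul0r det_w_id // ltW.
have [ga gb gd] := IH (fun i ij => hj i (ltnW ij)).
have [/andP[gl gr] gth] := greedy_next_lt th0 ga gb (hj j (ltnSn j)).
rewrite /greedy_seq iterS -/(greedy_seq th j).
split; [exact: le_trans ga (ltW gl) | exact: gr |].
have := det_w_superadd (lexx a) ga (ltW gl) (ltW gr).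
by rewrite gth -natr1 mulrDl mul1r; lra.
Qed.

Lemma greedy_seq_stops th : 0 < th -> exists j, \det (w (greedy_seq th j) b) <= th.
Proof.
move=> th0; apply: contrapT => /forallNP never.
have big i : th < \det (w (greedy_seq th i) b) by rewrite ltNge; apply/negP/never.
have [ga gb gd] := greedy_seq_inv (j := (Num.truncn (\det (w a b) / th)).+1) th0
  (fun i _ => big i).
have := truncnS_gt (\det (w a b) / th); rewrite ltr_pdivrMr // => hD.
have := det_w_le (lexx a) (lexx a) ga (ltW gb) (lexx b).
lra.
Qed.

Lemma greedy_run_exists th : 0 < th -> exists n sigma, greedy_run th n sigma.
Proof.
move=> th0; have [N dN minN] := ex_minnP (greedy_seq_stops th0).
have before i : (i < N)%N -> th < \det (w (greedy_seq th i) b).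
  by move=> iN; rewrite ltNge; apply/negP => /minN; rewrite leqNgt iN.
exists N.+1, (greedy_seq th); split => //.
  move=> [//|j] /andP[_]; rewrite ltnS => jN /=.
  have [ga gb _] := greedy_seq_inv (j := j) th0 (fun i ij => before i (ltn_trans ij jN)).
  by have [] := greedy_next_lt th0 ga gb (before j jN); split => //; apply: before.
rewrite /greedy_seq iterS -/(greedy_seq th N); apply: greedy_next_stop => //.
by have [] := greedy_seq_inv th0 before.
Qed.

End IntervalFunction.

Section RealIntegrals.
Context d (T : measurableType d) (R : realType) (mu : {measure set T -> \bar R}).
Implicit Types (D : set T) (f g : T -> R).

Lemma integrableR_Zl D (k : R) f : measurable D ->
  mu.-integrable D (EFin \o f) -> mu.-integrable D (EFin \o (fun x => k * f x)).
Proof. by move=> mD /(integrableZl mD k); apply: eq_integrable. Qed.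

Lemma integrableR_D D f g : measurable D ->
  mu.-integrable D (EFin \o f) -> mu.-integrable D (EFin \o g) ->
  mu.-integrable D (EFin \o (fun x => f x + g x)).
Proof.
move=> mD hf hg; apply: (eq_integrable mD _ _ _ (integrableD mD hf hg)).
by move=> x _ /=; rewrite EFinD.
Qed.

Lemma Rintegral_gt0 D f : measurable D -> mu.-integrable D (EFin \o f) ->
  (forall x, D x -> 0 <= f x) -> mu.-negligible (D `&` [set x | f x = 0]) ->
  (0 < mu D)%E -> 0 < \int[mu]_(x in D) f x.
Proof.
move=> mD fint f0 fnull muD; rewrite lt_neqAle Rintegral_ge0 // andbT.
apply/eqP => int0.
have abs0 : (\int[mu]_(x in D) `|(EFin \o f) x|)%E = 0.
  rewrite (eq_integral (EFin \o f)); last by move=> x /[!inE] Dx /=; rewrite ger0_norm ?f0.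
  by rewrite -(fineK (integrable_fin_num mD fint)); congr EFin; exact: esym int0.
have /integrableP[mf _] := fint.
have [N [mN muN sN]] := (ae_eq_integral_abs mu mD mf).1 abs0.
have nN : mu.-negligible N by exists N; split.
have : mu.-negligible D.
  apply: negligibleS (negligibleU nN fnull) => x Dx.
  have [fx0|fx0] := eqVneq (f x) 0; first by right.
  by left; apply: sN => /(_ Dx) [fx]; rewrite fx eqxx in fx0.
by move=> /(negligibleP mu mD) muD0; move: muD; rewrite muD0 ltxx.
Qed.

End RealIntegrals.

Section LebesgueItv.
Variable R : realType.
Local Notation mu := (@lebesgue_measure R).

Lemma Rintegral_itv_ooD (f : R -> R) s u t : s <= u -> u <= t ->
  mu.-integrable setT (EFin \o f) ->
  \int[mu]_(x in `]s, t[) f x = \int[mu]_(x in `]s, u[) f x + \int[mu]_(x in `]u, t[) f x.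
Proof.
move=> su ut hf.
have itv0 (v : R) : [set` `]v, v[] = set0 :> set R.
  by apply: set_itv_ge; rewrite bnd_simp ltxx.
have [<-|su'] := eqVneq s u; first by rewrite itv0 Rintegral_set0 add0r.
have [<-|ut'] := eqVneq u t; first by rewrite itv0 Rintegral_set0 addr0.
have hfI (i : interval R) : mu.-integrable [set` i] (EFin \o f).
  by apply: integrableS hf => //; exact: measurable_itv.
have := @Rintegral_itvB R f (BRight s) (BLeft t) u (hfI _).
rewrite -Rintegral_itv_bndo_bndc ?hfI // => <-; last by rewrite bnd_simp lt_neqAle ut' ut.
  by rewrite addrC subrK.
by rewrite bnd_simp.
Qed.

End LebesgueItv.

Section OmegaIntegrable.
Variable R : realType.
Local Notation mu := (@lebesgue_measure R).
Variable G : R -> 'M[R]_2.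
Hypothesis G_psd : forall t, psdmx2 (G t).
Hypothesis G_int : forall i j, mu.-integrable setT (EFin \o (fun t => G t i j)).

Let G_int_on (D : set R) i j :
  measurable D -> mu.-integrable D (EFin \o (fun t => G t i j)).
Proof. by move=> mD; apply: integrableS (G_int i j). Qed.

Lemma Omega_entry s t i j : Omega G s t i j = \int[mu]_(u in `]s, t[) G u i j.
Proof. by rewrite mxE. Qed.

Lemma qform2_Omega s t x y :
  qform2 (Omega G s t) x y = \int[mu]_(u in `]s, t[) qform2 (G u) x y.
Proof.
have mD : measurable [set` `]s, t[] by exact: measurable_itv.
rewrite /qform2 !Omega_entry -!RintegralZl ?G_int_on // -!RintegralD //.
- by apply: integrableR_D => //; apply: integrableR_Zl => //; apply: G_int_on.
- by apply: integrableR_Zl => //; apply: G_int_on.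
- by apply: integrableR_Zl => //; apply: G_int_on.
- by apply: integrableR_Zl => //; apply: G_int_on.
Qed.

Lemma Omega_psd s t : psdmx2 (Omega G s t).
Proof.
have sym : Omega G s t 0 1 = Omega G s t 1 0.
  by rewrite !Omega_entry; apply: eq_Rintegral => u _; have [] := G_psd u.
apply/(psdmx2_qformP sym) => x y; rewrite qform2_Omega.
apply: Rintegral_ge0 => u _; have [symG _ _ _] := G_psd u.
exact: (psdmx2_qformP symG).1 (G_psd u) x y.
Qed.

Lemma Omega_add s u t : s <= u -> u <= t -> Omega G s t = Omega G s u + Omega G u t.
Proof.
move=> su ut; apply/matrixP => i j; rewrite [RHS]mxE !Omega_entry.
exact: Rintegral_itv_ooD.
Qed.

Lemma Omega_det_cont s t : s <= t ->
  {within `[s, t], continuous (fun u => \det (Omega G s u))}.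
Proof.
move=> st.
have entry_cont i j : {within `[s, t], continuous (fun u => Omega G s u i j)}.
  have := parameterized_integral_continuous st (G_int_on i j (measurable_itv `[s, t])).
  apply: subspace_eq_continuous => u /set_mem /=; rewrite in_itv /= => /andP[su _].
  rewrite /from_subspace /parameterized_integral Omega_entry.
  have [<-|su'] := eqVneq s u.
    by rewrite set_itv1 Rintegral_set1 set_itv_ge ?Rintegral_set0 // bnd_simp ltxx.
  rewrite -Rintegral_itv_obnd_cbnd ?G_int_on //.
  by rewrite Rintegral_itv_bndo_bndc ?G_int_on.
have -> : (fun u => \det (Omega G s u)) =
    (fun u => Omega G s u 0 0 * Omega G s u 1 1 - Omega G s u 0 1 * Omega G s u 1 0).
  by apply: funext => u; rewrite det_mx2.
move=> u; exact: continuousB (continuousM (entry_cont 0 0 u) (entry_cont 1 1 u))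
  (continuousM (entry_cont 0 1 u) (entry_cont 1 0 u)).
Qed.

Lemma Omega_tr_gt0 s t : s < t ->
  mu.-negligible ([set` `]s, t[] `&` [set u | G u = 0]) -> 0 < \tr (Omega G s t).
Proof.
move=> st G0.
have mD : measurable [set` `]s, t[] by exact: measurable_itv.
have -> : \tr (Omega G s t) = \int[mu]_(u in `]s, t[) \tr (G u).
  rewrite mxtrace_mx2 !Omega_entry -RintegralD ?G_int_on //.
  by apply: eq_Rintegral => u _; rewrite mxtrace_mx2.
apply: Rintegral_gt0 => //.
- rewrite (_ : (fun u => \tr (G u)) = (fun u => G u 0 0 + G u 1 1)).
    by apply: integrableR_D; rewrite ?G_int_on.
  by apply: funext => u; rewrite mxtrace_mx2.
- by move=> u _; apply: psdmx2_tr_ge0.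
- by apply: negligibleS G0 => u [Du /= /psdmx2_tr_eq0 ->].
- have mu_st : mu `]s, t[ = (t - s)%:E.
    by have := lebesgue_measure_itv `]s, t[; rewrite /= lte_fin st -EFinB.
  have : (0 < (t - s)%:E)%E by rewrite lte_fin subr_gt0.
  by rewrite -mu_st.
Qed.

End OmegaIntegrable.

Lemma psd2_psdmx2 (R : realType) (M : 'M[R]_2) : psd2 M -> psdmx2 M.
Proof.
move=> [sym pos].
have e01 : M 0 1 = M 1 0 by have := congr1 (fun A : 'M[R]_2 => A 1 0) sym; rewrite mxE.
by apply/(psdmx2_qformP e01) => x y; rewrite -qform2_mulmx.
Qed.

Section Regularization.
Variable R : realType.
Local Notation mu := (@lebesgue_measure R).
Variables (a b : R) (H : R -> 'M[R]_2) (N : set R).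
Hypothesis H_meas : forall i j, measurable_fun `]a, b[ (fun t => H t i j).
Hypothesis H_lc : limit_circle a b H.
Hypothesis N_meas : measurable N.
Hypothesis N_null : mu N = 0.
Hypothesis H_psd : forall t, t \in `]a, b[ -> ~ N t -> psd2 (H t).
Hypothesis H_zero : mu.-negligible [set t | (t \in `]a, b[) /\ H t = 0].

Definition Hreg t : 'M[R]_2 := if t \in [set` `]a, b[] `\` N then H t else 0.

Lemma Hreg_in t : t \in `]a, b[ -> ~ N t -> Hreg t = H t.
Proof. by move=> It Nt; rewrite /Hreg mem_set. Qed.

Lemma Hreg_out t : t \notin `]a, b[ -> Hreg t = 0.
Proof.
by move=> It; rewrite /Hreg; case: ifP => // /set_mem [It' _]; rewrite It' in It.
Qed.

Lemma Hreg_psd t : psdmx2 (Hreg t).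
Proof.
rewrite /Hreg; case: ifP => [/set_mem [It Nt] | _]; first exact/psd2_psdmx2/H_psd.
by split; rewrite ?mxE // expr0n /= mulr0.
Qed.

Lemma Hreg_entry_measurable i j : measurable_fun setT (fun t => Hreg t i j).
Proof.
have mD : measurable ([set` `]a, b[] `\` N).
  by apply: measurableD => //; exact: measurable_itv.
rewrite (_ : (fun t => Hreg t i j) = (fun t => H t i j) \_ ([set` `]a, b[] `\` N)).
  apply/(measurable_restrictT _ mD).
  exact: measurable_funS (measurable_itv _) (@subDsetl _ _ _) (H_meas i j).
by apply: funext => t; rewrite patchE /Hreg; case: ifP; rewrite ?mxE.
Qed.

Lemma Hreg_ae (F : 'M[R]_2 -> R) (D : set R) : D `<=` `]a, b[ ->
  ae_eq mu D (fun t => (F (Hreg t))%:E) (fun t => (F (H t))%:E).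
Proof.
move=> DI; exists N; split => // t /= /not_implyP [Dt ne]; apply: contrapT => Nt.
by apply: ne; rewrite Hreg_in //; apply: DI.
Qed.

Lemma Hreg_tr_integrable : mu.-integrable setT (EFin \o (fun t => \tr (Hreg t))).
Proof.
have trE (G : R -> 'M[R]_2) : (fun t => \tr (G t)) = (fun t => G t 0 0 + G t 1 1).
  by apply: funext => t; rewrite mxtrace_mx2.
set f := fun t => \tr (Hreg t).
have mf : measurable_fun setT f.
  by rewrite /f trE; apply: measurable_funD; apply: Hreg_entry_measurable.
apply/integrableP; split; first exact/measurable_EFinP.
have onI : (\int[mu]_t (EFin \o f) t = \int[mu]_(t in `]a, b[) (EFin \o f) t)%E.
  rewrite (@integral_mkcond _ _ _ mu `]a, b[); apply: eq_integral => t _; rewrite patchE.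
  case: ifP => // /negP It; rewrite /comp /f /= Hreg_out ?mxtrace0 //.
  by apply/negP => /mem_set.
rewrite (@eq_integral _ _ _ mu _ (EFin \o f)); last first.
  by move=> t _; rewrite /comp /= ger0_norm //; apply/psdmx2_tr_ge0/Hreg_psd.
rewrite onI (@ae_eq_integral _ _ _ mu _ (fun t => (\tr (H t))%:E)).
- exact: H_lc.
- exact: measurable_itv.
- by apply/measurable_EFinP; apply: measurable_funS measurableT _ mf.
- by apply/measurable_EFinP; rewrite trE; apply: measurable_funD; apply: H_meas.
- exact: Hreg_ae.
Qed.

Lemma Hreg_integrable i j : mu.-integrable setT (EFin \o (fun t => Hreg t i j)).
Proof.
apply: (le_integrable measurableT _ _ Hreg_tr_integrable) => [|t _].
  by apply/measurable_EFinP; apply: Hreg_entry_measurable.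
rewrite /comp /= lee_fin (ger0_norm (psdmx2_tr_ge0 (Hreg_psd t))).
exact: psdmx2_entry_le_tr (Hreg_psd t).
Qed.

Lemma Omega_Hreg s t : a <= s -> t <= b -> Omega H s t = Omega Hreg s t.
Proof.
move=> sa tb; apply/matrixP => i j; rewrite !mxE /Rintegral; congr fine.
have DI : [set` `]s, t[] `<=` `]a, b[.
  move=> u /=; rewrite !in_itv /= => /andP[su ut].
  by rewrite (le_lt_trans sa su) (lt_le_trans ut tb).
symmetry; apply: ae_eq_integral.
- exact: measurable_itv.
- apply/measurable_EFinP; apply: measurable_funS measurableT _ (Hreg_entry_measurable _ _).
  exact: subsetT.
- by apply/measurable_EFinP; apply: measurable_funS (measurable_itv _) DI (H_meas _ _).
- exact: (Hreg_ae (fun M => M i j) DI).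
Qed.

Lemma Hreg_zero_negligible : mu.-negligible ([set` `]a, b[] `&` [set t | Hreg t = 0]).
Proof.
have nN : mu.-negligible N by exists N; split.
apply: negligibleS (negligibleU H_zero nN) => t [It Ht0].
have [Nt|Nt] := pselect (N t); [by right | left].
by split => //; rewrite -Hreg_in.
Qed.

End Regularization.

Lemma Hamiltonian_regularization (R : realType) (a b : R) (H : R -> 'M[R]_2) :
  is_Hamiltonian a b H -> limit_circle a b H ->
  exists G : R -> 'M[R]_2,
    [/\ forall t, psdmx2 (G t),
        forall i j, (@lebesgue_measure R).-integrable setT (EFin \o (fun t => G t i j)),
        forall s t, a <= s -> t <= b -> Omega H s t = Omega G s t &
        (@lebesgue_measure R).-negligible ([set` `]a, b[] `&` [set t | G t = 0])].
Proof.
move=> [H_meas _ [N [N_meas N_null HN]] H_zero] H_lc.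
have H_psd t : t \in `]a, b[ -> ~ N t -> psd2 (H t).
  by move=> It Nt; apply: contrapT => nP; apply: Nt; apply: HN => /(_ It).
exists (Hreg a b H N); split.
- exact: Hreg_psd.
- exact: Hreg_integrable.
- exact: Omega_Hreg.
- exact: Hreg_zero_negligible.
Qed.

Section HamiltonianOmega.
Variable R : realType.
Variables (a b : R) (H : R -> 'M[R]_2).
Hypotheses (hH : is_Hamiltonian a b H) (hlc : limit_circle a b H).

Lemma Omega_H_psd s t : a <= s -> t <= b -> psdmx2 (Omega H s t).
Proof.
move=> sa tb; have [G [Gpsd Gint HG _]] := Hamiltonian_regularization hH hlc.
by rewrite HG //; apply: Omega_psd.
Qed.

Lemma Omega_H_add s u t : a <= s -> s <= u -> u <= t -> t <= b ->
  Omega H s t = Omega H s u + Omega H u t.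
Proof.
move=> sa su ut tb; have [G [_ Gint HG _]] := Hamiltonian_regularization hH hlc.
rewrite !HG ?(le_trans sa su) ?(le_trans ut tb) //; exact: Omega_add.
Qed.

Lemma Omega_H_tr_gt0 s t : a <= s -> s < t -> t <= b -> 0 < \tr (Omega H s t).
Proof.
move=> sa st tb; have [G [Gpsd Gint HG G0]] := Hamiltonian_regularization hH hlc.
rewrite HG //; apply: Omega_tr_gt0 => //; apply: negligibleS G0 => u [/= su Gu].
split => //; move: su; rewrite !in_itv /= => /andP[su ut].
by rewrite (le_lt_trans sa su) (lt_le_trans ut tb).
Qed.

Lemma Omega_H_det_cont s : a <= s -> s < b ->
  {within `[s, b], continuous (fun t => \det (Omega H s t))}.
Proof.
move=> sa sb; have [G [_ Gint HG _]] := Hamiltonian_regularization hH hlc.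
apply: subspace_eq_continuous (Omega_det_cont Gint (ltW sb)).
by move=> t /set_mem /=; rewrite in_itv /= => /andP[_ tb]; rewrite /from_subspace HG.
Qed.

End HamiltonianOmega.

Section Kappa.
Variable R : realType.
Variables (a b : R) (H : R -> 'M[R]_2) (c : R).
Hypotheses (ab : a < b) (hH : is_Hamiltonian a b H) (hlc : limit_circle a b H).
Hypothesis c_gt0 : 0 < c.

Let w_psd s t : a <= s -> s <= t -> t <= b -> psdmx2 (Omega H s t).
Proof. by move=> sa _ tb; apply: (Omega_H_psd hH hlc sa tb). Qed.
Let w_add := Omega_H_add hH hlc.
Let w_tr_gt0 := Omega_H_tr_gt0 hH hlc.
Let w_cont := Omega_H_det_cont hH hlc.

Let th_gt0 r : 0 < r -> 0 < c / r ^+ 2.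
Proof. by move=> r0; rewrite divr_gt0 // exprn_gt0. Qed.

Lemma kappa_run r : 0 < r ->
  exists sigma, greedy_run a b (Omega H) (c / r ^+ 2) (kappa a b H c r) sigma.
Proof.
move=> r0; rewrite /kappa; case: pselect => [ex | []].
  by case: ex_minnP => n /asboolP.
exact: greedy_run_exists ab w_psd w_add w_tr_gt0 w_cont _ (th_gt0 r0).
Qed.

Lemma kappa_le_partition r k (s : nat -> R) :
  0 < r -> s 0%N = a -> s k = b -> (forall l, (l < k)%N -> s l < s l.+1) ->
  (forall l, (1 <= l <= k)%N -> \det (Omega H (s l.-1) (s l)) <= c / r ^+ 2) ->
  (kappa a b H c r <= k)%N.
Proof.
move=> r0 s0 sk sinc sdet; have [sigma run] := kappa_run r0.
apply: (greedy_run_min_pieces ab w_psd w_add w_tr_gt0 run (th_gt0 r0) s0 sk) => j jk.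
by rewrite ltW ?sinc // (sdet j.+1).
Qed.

Lemma kappa_ge_partition r k (s : nat -> R) :
  0 < r -> s 0%N = a -> s k = b -> (forall l, (l < k)%N -> s l < s l.+1) ->
  (forall l, (1 <= l <= k.-1)%N -> \det (Omega H (s l.-1) (s l)) >= c / r ^+ 2) ->
  (k <= kappa a b H c r)%N.
Proof.
move=> r0 s0 sk sinc sdet; have [sigma run] := kappa_run r0.
apply: (greedy_run_max_pieces ab w_psd w_add w_tr_gt0 (th_gt0 r0) run s0 sk sinc) => j jk.
by apply: (sdet j.+1); rewrite /= -ltn_predRL in jk *.
Qed.

Lemma kappa_nondecreasing r1 r2 : 0 < r1 -> r1 <= r2 ->
  (kappa a b H c r1 <= kappa a b H c r2)%N.
Proof.
move=> r10 r12; have r20 := lt_le_trans r10 r12.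
have [sigma1 run1] := kappa_run r10; have [sigma2 run2] := kappa_run r20.
apply: (greedy_run_anti ab w_psd w_add w_tr_gt0 (th_gt0 r20) _ run1 run2).
rewrite ler_pM2l // lef_pV2 ?posrE ?exprn_gt0 //.
nra.
Qed.

Lemma kappa_mulr n r : (0 < n)%N -> 0 < r ->
  (kappa a b H c (n%:R * r) <= n * kappa a b H c r)%N.
Proof.
move=> n0 r0; have nr0 : 0 < n%:R * r by rewrite mulr_gt0 ?ltr0n.
have [sigma run] := kappa_run r0; have [tau run'] := kappa_run nr0.
apply: (greedy_run_scale ab w_psd w_add w_tr_gt0 (th_gt0 nr0) n0 _ run').
have -> : n%:R ^+ 2 * (c / (n%:R * r) ^+ 2) = c / r ^+ 2.
  by rewrite exprMn; field; rewrite ?pnatr_eq0 -?lt0n ?gt_eqF.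
exact: run.
Qed.

End Kappa.

Theorem proposition5p9 (R : realType) (a b : R) (H : R -> 'M[R]_2) (c : R) :
  a < b -> is_Hamiltonian a b H -> limit_circle a b H -> 0 < c ->
  [/\ (* (i) *)
      (forall (r : R) (k : nat) (s : nat -> R),
         0 < r -> s 0%N = a -> s k = b -> (forall l, (l < k)%N -> s l < s l.+1) ->
         (forall l, (1 <= l <= k)%N -> \det (Omega H (s l.-1) (s l)) <= c / r ^+ 2) ->
         (kappa a b H c r <= k)%N),
      (* (ii) *)
      (forall (r : R) (k : nat) (s : nat -> R),
         0 < r -> s 0%N = a -> s k = b -> (forall l, (l < k)%N -> s l < s l.+1) ->
         (forall l, (1 <= l <= k.-1)%N -> \det (Omega H (s l.-1) (s l)) >= c / r ^+ 2) ->
         (k <= kappa a b H c r)%N),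
      (* (iii) *)
      (forall r1 r2 : R, 0 < r1 -> r1 <= r2 ->
         (kappa a b H c r1 <= kappa a b H c r2)%N) &
      (* (iv) *)
      (forall (n : nat) (r : R), (0 < n)%N -> 0 < r ->
         (kappa a b H c (n%:R * r) <= n * kappa a b H c r)%N)].
Proof.
move=> ab hH hlc c0; split.
- exact: kappa_le_partition ab hH hlc c0.
- exact: kappa_ge_partition ab hH hlc c0.
- exact: kappa_nondecreasing ab hH hlc c0.
- exact: kappa_mulr ab hH hlc c0.
Qed.
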